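(* Let $H=\sum_{i=1}^{3}E_i|E_i\rangle\langle E_i|$ be a non-degenerate Hamiltonian on a qutrit (distinct $E_1,E_2,E_3$, orthonormal eigenbasis $\{|E_i\rangle\}$), and let $|\psi_0\rangle=\sum_{i=1}^3c_i|E_i\rangle$ with $\sum_i|c_i|^2=1$. Let $\{|k_n\rangle\}_n$ be the Krylov basis generated from $|k_0\rangle=|\psi_0\rangle$ and $H$ by the Lanczos algorithm, and let $K(t)=\sum_n n|\langle k_n|e^{-iHt}|\psi_0\rangle|^2$ be the spread complexity. Put $C_{ij}=|c_i||c_j|$, $\omega_{ij}=E_i-E_j$, $b_1^2=\sum_{i<j}C_{ij}^2\omega_{ij}^2$, $N=\left(C_{23}^2\omega_{23}^2+C_{31}^2\omega_{31}^2+C_{12}^2\omega_{12}^2\right)^{-1/2}$, and $$\Omega(\omega_{12},\omega_{23})=\omega_{23}e^{-i\frac{(E_1+E_2)t}{2}}\sin\!\left(\frac{\omega_{12}t}{2}\right)+\omega_{12}e^{-i\frac{(E_2+E_3)t}{2}}\sin\!\left(\frac{\omega_{23}t}{2}\right).$$ Then $$K(t)=\frac{4}{b_1^2}\left|\sum_{i<j}C_{ij}^2\,\omega_{ij}\sin\!\left(\frac{\omega_{ij}t}{2}\right)e^{-i\frac{(E_i+E_j)t}{2}}\right|^2+8N^2C_{12}C_{23}C_{31}\,|\Omega(\omega_{12},\omega_{23})|^2.$$ *)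

From HB Require Import structures.
From mathcomp Require Import all_boot all_order all_algebra.
From mathcomp Require Import all_classical all_reals.
From mathcomp Require Import trigo.
From mathcomp Require Import complex.

Set Implicit Arguments.
Unset Strict Implicit.
Unset Printing Implicit Defensive.

Import Order.TTheory GRing.Theory Num.Theory.
Local Open Scope ring_scope.
Local Open Scope complex_scope.

Section QutritKrylov.
Variable R : realType.

Notation vec := 'cV[R[i]]_3.

Definition braket (u v : vec) : R[i] := \sum_(k < 3) (u k 0)^* * v k 0.

Definition vnorm (u : vec) : R := Num.sqrt (\sum_(k < 3) (Normc.normc (u k 0)) ^+ 2).

Definition expi (x : R) : R[i] := (cos x) +i* (sin x).

Definition hamiltonian (e : 'I_3 -> vec) (E : 'I_3 -> R) (v : vec) : vec :=
  \sum_(j < 3) ((E j)%:C * braket (e j) v) *: e j.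

(* e^{-iHt} = sum_i e^{-i E_i t} |E_i><E_i| (spectral functional calculus of H). *)
Definition evolution (e : 'I_3 -> vec) (E : 'I_3 -> R) (t : R) (v : vec) : vec :=
  \sum_(j < 3) (expi (- (E j * t)) * braket (e j) v) *: e j.

(* State = (|k_{n-1}>, |k_n>, b_n), with |k_{-1}> = 0, b_0 = 0.
   a_n = <k_n|H|k_n>, |A_{n+1}> = (H - a_n)|k_n> - b_n |k_{n-1}>,
   b_{n+1} = || A_{n+1} ||, |k_{n+1}> = b_{n+1}^{-1} |A_{n+1}>.
   When b_{n+1} = 0 the algorithm terminates; since 0^-1 = 0 this convention
   makes all further |k_m> equal to 0, so they do not contribute to K(t). *)
Definition lanczos_step (H : vec -> vec) (s : vec * vec * R) : vec * vec * R :=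
  let: (kprev, k, b) := s in
  let a := braket k (H k) in
  let A := H k - a *: k - b%:C *: kprev in
  let b' := vnorm A in
  (k, (b'%:C)^-1 *: A, b').

Fixpoint lanczos (H : vec -> vec) (k0 : vec) (n : nat) : vec * vec * R :=
  match n with
  | 0 => (0, k0, 0)
  | m.+1 => lanczos_step H (lanczos H k0 m)
  end.

Definition krylov (H : vec -> vec) (k0 : vec) (n : nat) : vec :=
  (lanczos H k0 n).1.2.

(* Spread complexity K(t) = sum_n n |<k_n| e^{-iHt} |psi_0>|^2; the Krylov basis
   of a qutrit has at most 3 elements (n = 0, 1, 2). *)
Definition spread_complexity (e : 'I_3 -> vec) (E : 'I_3 -> R) (psi0 : vec) (t : R) : R :=
  \sum_(n < 3) n%:R *
    (Normc.normc (braket (krylov (hamiltonian e E) psi0 n) (evolution e E t psi0)) ^+ 2).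

Definition cabs (z : R[i]) : R := Normc.normc z.

End QutritKrylov.

(* The indices 1, 2, 3 of the paper (eigenbasis labels) as elements of 'I_3. *)
Definition q1 : 'I_3 := @Ordinal 3 0 isT.
Definition q2 : 'I_3 := @Ordinal 3 1 isT.
Definition q3 : 'I_3 := @Ordinal 3 2 isT.

(* In the energy eigenbasis every Lanczos vector is [sum_j c_j r_j |E_j>] with real [r_j], so the
   Lanczos recursion becomes a real three-term recursion, orthonormal for the inner product with
   weights [p_j = |c_j|^2], and [<k_n|e^{-iHt}|psi_0> = sum_j p_j r_j e^{-i E_j t}].
   For [n = 1], [r = (E - <E>) / b_1] where [b_1^2] is the variance of the energy, and the
   identity [sum_j p_j (E_j - <E>) z_j = sum_{i<j} p_i p_j (E_i - E_j) (z_i - z_j)] together with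
   [e^{-i E_i t} - e^{-i E_j t} = -2i sin(w_ij t / 2) e^{-i (E_i + E_j) t / 2}] gives the first
   term.
   For [n = 2], [p r] is orthogonal to [(1, 1, 1)] and to [(E_1, E_2, E_3)], hence a multiple [l] of
   their cross product [(E_2 - E_3, E_3 - E_1, E_1 - E_2)], and normalisation gives
   [l^2 b_1^2 = p_1 p_2 p_3]; this is the second term.  When [b_1] or [b_2] vanishes the
   corresponding Krylov vector is [0], matching [x / 0 = 0] in the formula. *)

From HB Require Import structures.
From mathcomp Require Import all_boot all_order all_algebra.
From mathcomp Require Import all_classical all_reals.
From mathcomp Require Import trigo.
From mathcomp Require Import complex.
From mathcomp Require Import ring.
Set Implicit Arguments.
Unset Strict Implicit.
Unset Printing Implicit Defensive.

Import Order.TTheory GRing.Theory Num.Theory.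
Local Open Scope ring_scope.
Local Open Scope complex_scope.

Lemma sum_ord3 (M : nmodType) (F : 'I_3 -> M) : \sum_(j < 3) F j = F q1 + F q2 + F q3.
Proof.
rewrite !big_ord_recl big_ord0 addr0 addrA.
by congr (_ + _ + _); congr F; apply: val_inj.
Qed.

Lemma ord3P (j : 'I_3) : [\/ j = q1, j = q2 | j = q3].
Proof.
by case: j => -[|[|[|//]]] lt_j3; [apply: Or31 | apply: Or32 | apply: Or33]; apply: val_inj.
Qed.

Lemma centered_wsum_pairwise (K : comRingType) (p E z : 'I_3 -> K) :
  \sum_(j < 3) p j = 1 ->
  \sum_(j < 3) p j * (E j - \sum_(k < 3) p k * E k) * z j =
  p q1 * p q2 * (E q1 - E q2) * (z q1 - z q2) + p q1 * p q3 * (E q1 - E q3) * (z q1 - z q3)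
  + p q2 * p q3 * (E q2 - E q3) * (z q2 - z q3).
Proof.
rewrite !sum_ord3 => p_sum1.
have -> : p q3 = 1 - p q1 - p q2 by rewrite -p_sum1; ring.
ring.
Qed.

Lemma orthogonal_1E_cyclic (K : fieldType) (E f : 'I_3 -> K) :
  injective E -> \sum_(j < 3) f j = 0 -> \sum_(j < 3) f j * E j = 0 ->
  exists l, [/\ f q1 = l * (E q2 - E q3), f q2 = l * (E q3 - E q1) & f q3 = l * (E q1 - E q2)].
Proof.
rewrite !sum_ord3 => E_inj f_sum0 fE_sum0.
have d23 : E q2 - E q3 != 0 by rewrite subr_eq0 (inj_eq E_inj).
exists (f q1 / (E q2 - E q3)); split; first by rewrite divfK.
- apply: (mulIf d23); rewrite mulrAC divfK //.
  apply/eqP; rewrite -subr_eq0; apply/eqP.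
  transitivity ((f q1 * E q1 + f q2 * E q2 + f q3 * E q3) - E q3 * (f q1 + f q2 + f q3)).
    by ring.
  by rewrite f_sum0 fE_sum0 mulr0 subrr.
- apply: (mulIf d23); rewrite mulrAC divfK //.
  apply/eqP; rewrite -subr_eq0; apply/eqP.
  transitivity (E q2 * (f q1 + f q2 + f q3) - (f q1 * E q1 + f q2 * E q2 + f q3 * E q3)).
    by ring.
  by rewrite f_sum0 fE_sum0 mulr0 subrr.
Qed.

Lemma quadratic_not_root3 (K : fieldType) (E : 'I_3 -> K) a b :
  injective E -> ~ (forall j, E j ^+ 2 + a * E j + b = 0).
Proof.
move=> E_inj root.
have : (E q1 - E q2) * (E q2 - E q3) * (E q3 - E q1) != 0.
  by rewrite !mulf_neq0 // subr_eq0 (inj_eq E_inj).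
apply/negP; rewrite negbK; apply/eqP.
transitivity (- ((E q2 - E q3) * (E q1 ^+ 2 + a * E q1 + b)
                 + (E q3 - E q1) * (E q2 ^+ 2 + a * E q2 + b)
                 + (E q1 - E q2) * (E q3 ^+ 2 + a * E q3 + b))); first by ring.
by rewrite !root !mulr0 !addr0 oppr0.
Qed.

Lemma wsum_sqr_cyclic (K : comRingType) (p E r : 'I_3 -> K) l :
  p q1 * r q1 = l * (E q2 - E q3) -> p q2 * r q2 = l * (E q3 - E q1) ->
  p q3 * r q3 = l * (E q1 - E q2) ->
  p q1 * p q2 * p q3 * \sum_(j < 3) p j * r j * r j =
  l ^+ 2 * (p q1 * p q2 * (E q1 - E q2) ^+ 2 + p q1 * p q3 * (E q1 - E q3) ^+ 2
            + p q2 * p q3 * (E q2 - E q3) ^+ 2).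
Proof.
move=> r1 r2 r3; rewrite sum_ord3.
transitivity (p q2 * p q3 * (p q1 * r q1) ^+ 2 + p q1 * p q3 * (p q2 * r q2) ^+ 2
              + p q1 * p q2 * (p q3 * r q3) ^+ 2); first by ring.
by rewrite r1 r2 r3; ring.
Qed.

Lemma wsum_sqr_eq0 (R : realDomainType) (p f : 'I_3 -> R) :
  (forall j, 0 < p j) -> \sum_(j < 3) p j * f j * f j = 0 -> forall j, f j = 0.
Proof.
move=> p_gt0 /psumr_eq0P sum0 j.
have /eqP : p j * f j * f j = 0.
  by apply: sum0 => // k _; rewrite -mulrA -expr2 mulr_ge0 ?sqr_ge0 ?ltW.
by rewrite -mulrA mulf_eq0 (gt_eqF (p_gt0 j)) -expr2 sqrf_eq0 => /eqP.
Qed.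

Lemma conj_real_complex (R : realType) (x : R) : (x%:C)^*%R = x%:C.
Proof. by apply/eqP; rewrite eq_complex /= oppr0 !eqxx. Qed.

Lemma mulJc (R : realType) (x : R[i]) : x^* * x = (cabs x ^+ 2)%:C.
Proof. by rewrite mulrC -sqr_normc (rmorphXn (@real_complex R)). Qed.

Lemma sqr_cabsMr (R : realType) (x : R[i]) (a : R) : cabs (x * a%:C) ^+ 2 = cabs x ^+ 2 * a * a.
Proof. by rewrite /cabs Normc.normcM exprMn /= expr0n addr0 sqr_sqrtr ?sqr_ge0 // mulrA. Qed.

Lemma sqr_cabsMl (R : realType) (a : R) (w : R[i]) : cabs (a%:C * w) ^+ 2 = a ^+ 2 * cabs w ^+ 2.
Proof. by rewrite mulrC sqr_cabsMr -mulrA -expr2 mulrC. Qed.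

Lemma sqr_cabs_i_half (R : realType) (w : R[i]) : cabs ('i / 2 * w) ^+ 2 = cabs w ^+ 2 / 4.
Proof.
have cabs2 (a b : R) : cabs (a +i* b) ^+ 2 = a ^+ 2 + b ^+ 2.
  by rewrite /cabs /= sqr_sqrtr // addr_ge0 // sqr_ge0.
by case: w => a b; simpc; rewrite !cabs2; field.
Qed.

Lemma sin_mul_expi (R : realType) (x y t : R) :
  (sin ((x - y) * t / 2))%:C * expi (- ((x + y) * t / 2)) =
  'i / 2 * (expi (- (x * t)) - expi (- (y * t))).
Proof.
have -> : - (x * t) = - ((x + y) * t / 2) - (x - y) * t / 2 by field.
have -> : - (y * t) = - ((x + y) * t / 2) + (x - y) * t / 2 by field.
set m := (x + y) * t / 2; set h := (x - y) * t / 2.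
rewrite /expi !sinD !cosD !cosN !sinN; simpc.
by apply/eqP; rewrite eq_complex /=; apply/andP; split; apply/eqP; field.
Qed.

Section EigenCoordinates.
Variables (R : realType) (e : 'I_3 -> 'cV[R[i]]_3).

Definition coords (x : 'I_3 -> R[i]) : 'cV[R[i]]_3 := \sum_(j < 3) x j *: e j.

Lemma braket_coordsr u x : braket u (coords x) = \sum_(j < 3) x j * braket u (e j).
Proof.
rewrite /braket /coords; under eq_bigr do rewrite summxE big_distrr.
rewrite exchange_big; apply: eq_bigr => j _; rewrite big_distrr /=.
by apply: eq_bigr => k _; rewrite mxE mulrCA.
Qed.

Lemma braket_coordsl x v : braket (coords x) v = \sum_(j < 3) (x j)^* * braket (e j) v.
Proof.
rewrite /braket /coords; under eq_bigr do rewrite summxE rmorph_sum big_distrl.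
rewrite exchange_big; apply: eq_bigr => j _; rewrite big_distrr /=.
by apply: eq_bigr => k _; rewrite mxE rmorphM mulrA.
Qed.

Lemma coordsB x y z a b :
  coords x - a *: coords y - b *: coords z = coords (fun j => x j - a * y j - b * z j).
Proof.
rewrite /coords !scaler_sumr -!sumrB; apply: eq_bigr => j _.
by rewrite !scalerA !scalerBl.
Qed.

Lemma coordsZ a x : a *: coords x = coords (fun j => a * x j).
Proof. by rewrite /coords scaler_sumr; apply: eq_bigr => j _; rewrite scalerA. Qed.

Hypothesis e_orthonormal : forall i j : 'I_3, braket (e i) (e j) = (i == j)%:R.

Lemma braket_basis_coords i x : braket (e i) (coords x) = x i.
Proof.
rewrite braket_coordsr (bigD1 i) //= e_orthonormal eqxx mulr1 big1 ?addr0 //.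
by move=> j /negbTE; rewrite e_orthonormal eq_sym => ->; rewrite mulr0.
Qed.

Lemma braket_coords x y : braket (coords x) (coords y) = \sum_(j < 3) (x j)^* * y j.
Proof. by rewrite braket_coordsl; apply: eq_bigr => j _; rewrite braket_basis_coords. Qed.

Lemma hamiltonian_coords E x :
  hamiltonian e E (coords x) = coords (fun j => (E j)%:C * x j).
Proof. by apply: eq_bigr => j _; rewrite braket_basis_coords. Qed.

Lemma evolution_coords E t x :
  evolution e E t (coords x) = coords (fun j => expi (- (E j * t)) * x j).
Proof. by apply: eq_bigr => j _; rewrite braket_basis_coords. Qed.

Lemma vnorm_coords x : vnorm (coords x) = Num.sqrt (\sum_(j < 3) cabs (x j) ^+ 2).
Proof.
rewrite /vnorm; congr Num.sqrt; apply: complexI; rewrite !rmorph_sum /=.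
transitivity (braket (coords x) (coords x)).
  by apply: eq_bigr => k _; rewrite mulJc.
by rewrite braket_coords; apply: eq_bigr => j _; rewrite mulJc.
Qed.

End EigenCoordinates.

Section RealLanczos.
Variables (R : realType) (p E : 'I_3 -> R).

Definition wdot (f g : 'I_3 -> R) : R := \sum_(j < 3) p j * f j * g j.

Definition rlanczos_step (s : ('I_3 -> R) * ('I_3 -> R) * R) : ('I_3 -> R) * ('I_3 -> R) * R :=
  let: (f, g, b) := s in
  let a := wdot g (fun j => E j * g j) in
  let A j := E j * g j - a * g j - b * f j in
  let b' := Num.sqrt (wdot A A) in
  (g, fun j => A j / b', b').

Fixpoint rlanczos (n : nat) : ('I_3 -> R) * ('I_3 -> R) * R :=
  if n is m.+1 then rlanczos_step (rlanczos m) else (fun=> 0, fun=> 1, 0).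

Lemma wdotC f g : wdot f g = wdot g f.
Proof. by apply: eq_bigr => j _; rewrite mulrAC. Qed.

Lemma wdot_divl f g b : wdot (fun j => f j / b) g = wdot f g / b.
Proof. by rewrite /wdot mulr_suml; apply: eq_bigr => j _; rewrite mulrA mulrAC. Qed.

Hypothesis p_ge0 : forall j, 0 <= p j.

Lemma wdot_ge0 f : 0 <= wdot f f.
Proof. by apply: sumr_ge0 => j _; rewrite -mulrA mulr_ge0 // -expr2 sqr_ge0. Qed.

(* [b * wdot f f = b] says that [f] is normalised unless [b = 0], as for the initial [f = 0]. *)
Lemma rlanczos_step_orthogonal f g b g' b' :
  rlanczos_step (f, g, b) = (g, g', b') ->
  wdot g g = 1 -> wdot f g = 0 -> b * wdot f f = b -> wdot g (fun j => E j * f j) = b ->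
  [/\ wdot g' f = 0, wdot g' g = 0 & wdot g' (fun j => E j * g j) = b'].
Proof.
case=> <- <-; move=> gg fg bff gEf; set a := wdot g _.
set A := fun j => E j * g j - a * g j - b * f j.
rewrite !wdot_divl.
have Af : wdot A f = wdot g (fun j => E j * f j) - a * wdot f g - b * wdot f f.
  by rewrite /wdot !sum_ord3 /A; ring.
have Ag : wdot A g = a - a * wdot g g - b * wdot f g.
  by rewrite /wdot !sum_ord3 /A /a /wdot !sum_ord3; ring.
have AEg : wdot A (fun j => E j * g j) = wdot A A + a * wdot A g + b * wdot A f.
  by rewrite /wdot !sum_ord3 /A; ring.
rewrite AEg Af Ag gg fg bff gEf !(mulr0, mulr1, subr0, subrr, mul0r, addr0).
split=> //; set b'' := Num.sqrt _.
have [->|b''_neq0] := eqVneq b'' 0; first by rewrite invr0 !mulr0.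
by rewrite -(sqr_sqrtr (wdot_ge0 A)) -/b'' expr2 mulfK.
Qed.

Lemma rlanczos_step_normalized f g b g' b' :
  rlanczos_step (f, g, b) = (g, g', b') -> b' != 0 -> wdot g' g' = 1.
Proof.
case=> <- <-; set a := wdot g _.
set A := fun j => E j * g j - a * g j - b * f j; set b'' := Num.sqrt _ => b''_neq0.
rewrite wdot_divl wdotC wdot_divl -mulrA -invfM -expr2.
by rewrite -(sqr_sqrtr (wdot_ge0 A)) -/b'' divff // sqrf_eq0.
Qed.

Definition wmean : R := \sum_(j < 3) p j * E j.

Definition wvar : R := wdot (fun j => E j - wmean) (fun j => E j - wmean).

Definition beat (t : R) (i j : 'I_3) : R[i] :=
  (p i * p j * (E i - E j) * sin ((E i - E j) * t / 2))%:C * expi (- ((E i + E j) * t / 2)).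

Definition amplitude (t : R) (r : 'I_3 -> R) : R[i] :=
  \sum_(j < 3) (p j * r j)%:C * expi (- (E j * t)).

End RealLanczos.

Section LanczosCoordinates.
Variables (R : realType) (e : 'I_3 -> 'cV[R[i]]_3) (E : 'I_3 -> R) (c : 'I_3 -> R[i]).
Hypothesis e_orthonormal : forall i j : 'I_3, braket (e i) (e j) = (i == j)%:R.

Let p j := cabs (c j) ^+ 2.
Let lift (r : 'I_3 -> R) := coords e (fun j => c j * (r j)%:C).

Lemma lanczos_step_coords f g b :
  lanczos_step (hamiltonian e E) (lift f, lift g, b) =
  let: (f', g', b') := rlanczos_step p E (f, g, b) in (lift f', lift g', b').
Proof.
rewrite /lanczos_step /rlanczos_step /lift hamiltonian_coords // braket_coords //.
set a := wdot _ _ _.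
have -> : \sum_(j < 3) (c j * (g j)%:C)^* * ((E j)%:C * (c j * (g j)%:C)) = a%:C.
  rewrite /a /wdot rmorph_sum; apply: eq_bigr => j _.
  rewrite rmorphM /= conj_real_complex /p.
  transitivity ((c j)^* * c j * (g j * (E j * g j))%:C); last by rewrite mulJc -rmorphM !mulrA.
  by rewrite !rmorphM /=; ring.
rewrite coordsB coordsZ vnorm_coords //.
have hA j : (E j)%:C * (c j * (g j)%:C) - a%:C * (c j * (g j)%:C) - b%:C * (c j * (f j)%:C)
            = c j * (E j * g j - a * g j - b * f j)%:C.
  by rewrite !rmorphB !rmorphM /=; ring.
under eq_bigr do rewrite hA sqr_cabsMr.
congr (_, coords e _, _); apply: funext => j.
by rewrite hA rmorphM fmorphV /=; ring.
Qed.

Lemma lanczos_coords n :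
  lanczos (hamiltonian e E) (coords e c) n =
  let: (f, g, b) := rlanczos p E n in (lift f, lift g, b).
Proof.
have lift1 : lift (fun=> 1) = coords e c.
  by congr coords; apply: funext => j; rewrite mulr1.
elim: n => [|n /= ->].
  rewrite /= lift1; congr (_, _, _).
  by rewrite /lift /coords big1 // => j _; rewrite mulr0 scale0r.
by case: (rlanczos p E n) => [[f g] b]; rewrite lanczos_step_coords.
Qed.

Lemma braket_evolution_coords t r :
  braket (lift r) (evolution e E t (coords e c)) = amplitude p E t r.
Proof.
rewrite evolution_coords // braket_coords //; apply: eq_bigr => j _.
rewrite rmorphM /= conj_real_complex rmorphM /=.
transitivity ((c j)^* * c j * (r j)%:C * expi (- (E j * t))); first by ring.
by rewrite mulJc.
Qed.

Lemma spread_complexity_coords t :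
  spread_complexity e E (coords e c) t =
  cabs (amplitude p E t (rlanczos p E 1).1.2) ^+ 2
  + 2 * cabs (amplitude p E t (rlanczos p E 2).1.2) ^+ 2.
Proof.
have amplitudeE n : braket (krylov (hamiltonian e E) (coords e c) n)
    (evolution e E t (coords e c)) = amplitude p E t (rlanczos p E n).1.2.
  rewrite /krylov lanczos_coords.
  by case: (rlanczos p E n) => [[f g] b]; rewrite braket_evolution_coords.
rewrite /spread_complexity sum_ord3 !amplitudeE.
by rewrite (_ : (nat_of_ord q1)%:R = 0) // mul0r add0r mul1r.
Qed.

End LanczosCoordinates.

Section QutritLanczos.
Variables (R : realType) (p E : 'I_3 -> R).
Hypotheses (p_ge0 : forall j, 0 <= p j) (p_sum1 : \sum_(j < 3) p j = 1) (E_inj : injective E).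

Let mean := wmean p E.
Let var := wvar p E.
Let b1 := Num.sqrt var.
Let r1 j := (E j - mean) / b1.
Let r2 := (rlanczos p E 2).1.2.
Let b2 := (rlanczos p E 2).2.

Lemma wvar_pairwise :
  var = p q1 * p q2 * (E q1 - E q2) ^+ 2 + p q1 * p q3 * (E q1 - E q3) ^+ 2
        + p q2 * p q3 * (E q2 - E q3) ^+ 2.
Proof. by rewrite /var /wvar /wmean /wdot centered_wsum_pairwise //; ring. Qed.

Lemma rlanczos1E : rlanczos p E 1 = (fun=> 1, r1, b1).
Proof.
have centeredE j : E j * 1 - wdot p (fun=> 1) (fun j => E j * 1) * 1 - 0 * 0 = E j - mean.
  by rewrite /wdot !mulr1 mul0r subr0; under eq_bigr do rewrite !mulr1.
have centered : (fun j => E j * 1 - wdot p (fun=> 1) (fun j => E j * 1) * 1 - 0 * 0) =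
                (fun j => E j - mean) by apply: funext => j; rewrite centeredE.
rewrite /= /rlanczos_step centered.
by congr (_, _, _); apply: funext => j; rewrite centeredE.
Qed.

Lemma rlanczos2E : rlanczos_step p E (fun=> 1, r1, b1) = (r1, r2, b2).
Proof.
rewrite /r2 /b2; change (rlanczos p E 2) with (rlanczos_step p E (rlanczos p E 1)).
by rewrite rlanczos1E.
Qed.

Lemma wdot11 : wdot p (fun=> 1) (fun=> 1) = 1.
Proof. by rewrite /wdot; under eq_bigr do rewrite !mulr1. Qed.

Lemma rlanczos2_b1_eq0 : b1 = 0 -> r2 = fun=> 0.
Proof.
move=> b1_0; have r1_0 : r1 = fun=> 0 by apply: funext => j; rewrite /r1 b1_0 invr0 mulr0.
have := rlanczos2E; rewrite r1_0 b1_0 => -[<-].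
by move=> _; apply: funext => j; rewrite !(mulr0, mul0r, subr0).
Qed.

Lemma rlanczos1_orthonormal :
  b1 != 0 -> [/\ wdot p r1 r1 = 1, wdot p r1 (fun=> 1) = 0 & wdot p r1 (fun j => E j * 1) = b1].
Proof.
move=> b1_neq0; have [] // := rlanczos_step_orthogonal p_ge0 rlanczos1E wdot11.
- by apply: big1 => j _; rewrite !mulr0 mul0r.
- by rewrite mul0r.
- by apply: big1 => j _; rewrite !mulr0.
move=> _ r11 r1E; split=> //; exact: (rlanczos_step_normalized p_ge0 rlanczos1E).
Qed.

Lemma rlanczos2_orthogonal :
  \sum_(j < 3) p j * r2 j = 0 /\ \sum_(j < 3) p j * r2 j * E j = 0.
Proof.
have [b1_0|b1_neq0] := eqVneq b1 0.
  by rewrite rlanczos2_b1_eq0 //; split; apply: big1 => j _; rewrite !(mulr0, mul0r).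
have [r1r1 r11 r1E] := rlanczos1_orthonormal b1_neq0.
have [] // := rlanczos_step_orthogonal p_ge0 rlanczos2E r1r1.
- by rewrite wdotC.
- by rewrite wdot11 mulr1.
move=> r21 r2r1 _; split.
  by rewrite -[RHS]r21; apply: eq_bigr => j _; rewrite mulr1.
transitivity (b1 * wdot p r2 r1 + mean * wdot p r2 (fun=> 1)); last first.
  by rewrite r21 r2r1 !mulr0 addr0.
by rewrite /wdot !sum_ord3 /r1; field.
Qed.

Lemma rlanczos1_neq0 : (forall j, 0 < p j) -> b1 != 0.
Proof.
move=> p_gt0; rewrite sqrtr_eq0 -ltNge lt0r (wdot_ge0 p_ge0) andbT; apply/eqP => var0.
have E_mean j : E j = mean.
  apply/eqP; rewrite -subr_eq0; apply/eqP.
  exact: (wsum_sqr_eq0 p_gt0 (f := fun j => E j - mean)).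
by have /E_inj/(congr1 val) := etrans (E_mean q1) (esym (E_mean q2)).
Qed.

Lemma rlanczos2_neq0 : (forall j, 0 < p j) -> b2 != 0.
Proof.
move=> p_gt0; have b1_neq0 := rlanczos1_neq0 p_gt0.
have := rlanczos2E; rewrite /rlanczos_step; set a1 := wdot p r1 _.
set A := fun j => _ - _ - _ => -[_ <-].
rewrite sqrtr_eq0 -ltNge lt0r (wdot_ge0 p_ge0) andbT; apply/eqP => AA0.
have A0 j : A j = 0 by apply: (wsum_sqr_eq0 p_gt0 (f := A)).
have var_b1 : var = b1 ^+ 2 by rewrite sqr_sqrtr // wdot_ge0.
(* [b1 * A j = (E j - a1) * (E j - mean) - b1 ^+ 2] is a monic quadratic in [E j]. *)
apply: (@quadratic_not_root3 _ E (- (a1 + mean)) (a1 * mean - var) E_inj) => j.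
transitivity (b1 * A j); last by rewrite A0 mulr0.
by rewrite /A /r1 var_b1; field.
Qed.

Lemma rlanczos2_cyclic : exists l,
  [/\ p q1 * r2 q1 = l * (E q2 - E q3), p q2 * r2 q2 = l * (E q3 - E q1)
    & p q3 * r2 q3 = l * (E q1 - E q2)] /\ l ^+ 2 = p q1 * p q2 * p q3 / var.
Proof.
have [orth1 orthE] := rlanczos2_orthogonal.
have [l [h1 h2 h3]] := orthogonal_1E_cyclic E_inj orth1 orthE.
exists l; split => //.
have [var0|var_neq0] := eqVneq var 0.
  move: h1; rewrite rlanczos2_b1_eq0; last by rewrite /b1 var0 sqrtr0.
  move=> /esym/eqP; rewrite mulr0 mulf_eq0 subr_eq0 (inj_eq E_inj) orbF => /eqP ->.
  by rewrite var0 invr0 !mulr0 expr0n.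
set P := p q1 * p q2 * p q3.
have P_normalized : P * wdot p r2 r2 = P.
  have [->|P_neq0] := eqVneq P 0; first by rewrite mul0r.
  have p_gt0 j : 0 < p j.
    rewrite lt0r p_ge0 andbT; apply: contraNneq P_neq0 => pj0.
    by rewrite /P; case: (ord3P j) pj0 => -> ->; rewrite !(mul0r, mulr0).
  by rewrite (rlanczos_step_normalized p_ge0 rlanczos2E (rlanczos2_neq0 p_gt0)) mulr1.
by rewrite -P_normalized (wsum_sqr_cyclic h1 h2 h3) -wvar_pairwise mulfK.
Qed.

Variable t : R.

Let z j := expi (- (E j * t)).

Lemma beat_expi i j : beat p E t i j = 'i / 2 * ((p i * p j * (E i - E j))%:C * (z i - z j)).
Proof. by rewrite /beat rmorphM -[_%:C * _%:C * expi _]mulrA sin_mul_expi /z; ring. Qed.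

Lemma amplitude1 :
  cabs (amplitude p E t (rlanczos p E 1).1.2) ^+ 2 =
  4 / var * cabs (beat p E t q1 q2 + beat p E t q1 q3 + beat p E t q2 q3) ^+ 2.
Proof.
have -> : (rlanczos p E 1).1.2 = r1 by rewrite rlanczos1E.
set S := (p q1 * p q2 * (E q1 - E q2))%:C * (z q1 - z q2)
       + (p q1 * p q3 * (E q1 - E q3))%:C * (z q1 - z q3)
       + (p q2 * p q3 * (E q2 - E q3))%:C * (z q2 - z q3).
have -> : beat p E t q1 q2 + beat p E t q1 q3 + beat p E t q2 q3 = 'i / 2 * S.
  by rewrite !beat_expi /S; ring.
have -> : amplitude p E t r1 = (b1^-1)%:C * S.
  have p_sum1C : \sum_(j < 3) (p j)%:C = 1 :> R[i] by rewrite -rmorph_sum p_sum1.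
  rewrite /S !rmorphM !rmorphB.
  rewrite -(centered_wsum_pairwise (fun j => (E j)%:C) z p_sum1C) mulr_sumr.
  apply: eq_bigr => j _.
  have -> : \sum_(k < 3) (p k)%:C * (E k)%:C = mean%:C :> R[i].
    by rewrite /mean rmorph_sum; apply: eq_bigr => k _; rewrite rmorphM.
  rewrite -rmorphB -rmorphM [RHS]mulrA -rmorphM /z; congr (_%:C * _).
  by rewrite /r1; ring.
rewrite sqr_cabsMl sqr_cabs_i_half exprVn sqr_sqrtr ?wdot_ge0 //.
by rewrite [RHS]mulrC -mulrA mulKf ?pnatr_eq0 // mulrC.
Qed.

Let Omega := ((E q2 - E q3) * sin ((E q1 - E q2) * t / 2))%:C * expi (- ((E q1 + E q2) * t / 2))
           - ((E q1 - E q2) * sin ((E q2 - E q3) * t / 2))%:C * expi (- ((E q2 + E q3) * t / 2)).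

Lemma amplitude2 :
  cabs (amplitude p E t r2) ^+ 2 = 4 * (p q1 * p q2 * p q3 / var) * cabs Omega ^+ 2.
Proof.
set D := (E q2 - E q3)%:C * (z q1 - z q2) - (E q1 - E q2)%:C * (z q2 - z q3).
have -> : Omega = 'i / 2 * D.
  by rewrite /Omega !rmorphM -![_%:C * _%:C * expi _]mulrA !sin_mul_expi /D /z; ring.
have [l [[h1 h2 h3] l2]] := rlanczos2_cyclic.
have -> : amplitude p E t r2 = l%:C * D.
  by rewrite /amplitude sum_ord3 h1 h2 h3 /D /z !rmorphM !rmorphB; ring.
rewrite sqr_cabsMl sqr_cabs_i_half l2.
by rewrite [RHS]mulrC -[RHS]mulrA mulKf ?pnatr_eq0 // mulrC.
Qed.

End QutritLanczos.

Theorem proposition4 (R : realType) (e : 'I_3 -> 'cV[R[i]]_3) (E : 'I_3 -> R)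
    (c : 'I_3 -> R[i]) (t : R) :
  (forall i j : 'I_3, braket (e i) (e j) = (i == j)%:R) ->
  injective E ->
  \sum_(i < 3) cabs (c i) ^+ 2 = 1 ->
  let psi0 := \sum_(i < 3) c i *: e i in
  let C i j := cabs (c i) * cabs (c j) in
  let w i j := E i - E j in
  let b1sq := C q1 q2 ^+ 2 * w q1 q2 ^+ 2 + C q1 q3 ^+ 2 * w q1 q3 ^+ 2
              + C q2 q3 ^+ 2 * w q2 q3 ^+ 2 in
  let N := (Num.sqrt (C q2 q3 ^+ 2 * w q2 q3 ^+ 2 + C q3 q1 ^+ 2 * w q3 q1 ^+ 2
                      + C q1 q2 ^+ 2 * w q1 q2 ^+ 2))^-1 in
  let term i j := (C i j ^+ 2 * w i j * sin (w i j * t / 2))%:C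
                  * expi (- ((E i + E j) * t / 2)) in
  let Omega := (w q2 q3 * sin (w q1 q2 * t / 2))%:C * expi (- ((E q1 + E q2) * t / 2))
             - (w q1 q2 * sin (w q2 q3 * t / 2))%:C * expi (- ((E q2 + E q3) * t / 2)) in
  spread_complexity e E psi0 t =
    4 / b1sq * cabs (term q1 q2 + term q1 q3 + term q2 q3) ^+ 2
    + 8 * N ^+ 2 * C q1 q2 * C q2 q3 * C q3 q1 * cabs Omega ^+ 2.
Proof.
move=> e_orthonormal E_inj c_normalized psi0 C w b1sq N term Omega.
pose p j := cabs (c j) ^+ 2.
have p_ge0 j : 0 <= p j by exact: sqr_ge0.
have CE i j : C i j ^+ 2 = p i * p j by exact: exprMn.
have b1sqE : b1sq = wvar p E by rewrite wvar_pairwise // /b1sq !CE.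
have NE : N ^+ 2 = (wvar p E)^-1.
  rewrite /N.
  have -> : C q2 q3 ^+ 2 * w q2 q3 ^+ 2 + C q3 q1 ^+ 2 * w q3 q1 ^+ 2
            + C q1 q2 ^+ 2 * w q1 q2 ^+ 2 = wvar p E.
    by rewrite wvar_pairwise // !CE /w; ring.
  by rewrite exprVn sqr_sqrtr // wdot_ge0.
have termE i j : term i j = beat p E t i j by rewrite /term CE.
rewrite spread_complexity_coords // amplitude1 // amplitude2 // b1sqE NE !termE /Omega /w.
by rewrite /C /p; ring.
Qed.
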